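(* If $A\in S_n(\mathbb{F}_2)$ is an alternate matrix of rank $r>0$, then there exist linearly independent $\mathbf{x}_1,\ldots,\mathbf{x}_r\in\mathbb{F}_2^n$ with $A=\mathbf{x}_1\mathbf{x}_1^{\top}+\cdots+\mathbf{x}_r\mathbf{x}_r^{\top}+(\mathbf{x}_1+\cdots+\mathbf{x}_r)(\mathbf{x}_1+\cdots+\mathbf{x}_r)^{\top}$. Moreover, if $r$ is even and $A=\mathbf{y}_1\circ\mathbf{y}_2+\cdots+\mathbf{y}_{r-1}\circ\mathbf{y}_r$ for linearly independent $\mathbf{y}_1,\ldots,\mathbf{y}_r$, then the vectors $\mathbf{x}_1=\mathbf{y}_1$, $\mathbf{x}_2=\mathbf{y}_2$, and for $2\le k\le r/2$, $\mathbf{x}_{2k-1}=\mathbf{y}_1+\cdots+\mathbf{y}_{2k-2}+\mathbf{y}_{2k-1}$, $\mathbf{x}_{2k}=\mathbf{y}_1+\cdots+\mathbf{y}_{2k-2}+\mathbf{y}_{2k}$, have this property.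
   Context: $S_n(\mathbb{F}_2)$ is the set of symmetric $n\times n$ matrices over the binary field; such a matrix is alternate if its diagonal is zero. For $\mathbf{x},\mathbf{y}\in\mathbb{F}_2^n$, $\mathbf{x}\circ\mathbf{y}=\mathbf{x}\mathbf{y}^{\top}+\mathbf{y}\mathbf{x}^{\top}$. *)

From HB Require Import structures.
From mathcomp Require Import all_boot all_order all_algebra.
Set Implicit Arguments. Unset Strict Implicit. Unset Printing Implicit Defensive.
Import GRing.Theory.
Local Open Scope ring_scope.

Definition F2 := 'F_2.

Definition symmetric_mx n (A : 'M[F2]_n) : Prop := A^T = A.

Definition alternate_mx n (A : 'M[F2]_n) : Prop :=
  symmetric_mx A /\ forall i, A i i = 0.

Definition circ n (x y : 'cV[F2]_n) : 'M[F2]_n := x *m y^T + y *m x^T.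

(* x_1 x_1^T + ... + x_r x_r^T + (x_1+...+x_r)(x_1+...+x_r)^T,
   for the family x_0, ..., x_{r-1} (0-indexed) *)
Definition sum_sq_form n r (x : nat -> 'cV[F2]_n) : 'M[F2]_n :=
  \sum_(i < r) x i *m (x i)^T + (\sum_(i < r) x i) *m (\sum_(i < r) x i)^T.

Definition lin_indep n r (x : nat -> 'cV[F2]_n) : Prop := free (mkseq x r).

(* The explicit vectors of the second part (0-indexed):
   indices j = 0,1 (k = 1): x_j = y_j;
   indices j = 2k-2, 2k-1 (paper's 2k-1, 2k), k >= 2:
   x_j = y_0 + ... + y_{2k-3} + y_j, where 2k-2 = 2*(j/2). *)
Definition x_of_y n (y : nat -> 'cV[F2]_n) (j : nat) : 'cV[F2]_n :=
  if (j < 2)%N then y j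
  else \sum_(i < (j./2).*2) y i + y j.

(* If A i j = 1, the rows a = A_i and b = A_j of an alternate matrix A over
   F_2 span a complement of the row space of A' = A - a^T o b^T, which is again
   alternate with rows and columns i, j zero; so rank A' = rank A - 2, and
   induction gives A = y_1 o y_2 + ... + y_(r-1) o y_r with the y_k spanning the
   row space of A.  With s = y_1 + ... + y_(2k-2), the vectors
   x_(2k-1) = s + y_(2k-1), x_(2k) = s + y_(2k) arise from the y_k by a
   unitriangular substitution, hence are independent, and in characteristic 2
   (s + u)(s + u)^T + (s + v)(s + v)^T + (s + u + v)(s + u + v)^T = s s^T + u o v,
   which telescopes to the sum-of-squares form. *)
From HB Require Import structures.
From mathcomp Require Import all_boot all_order all_algebra.
From mathcomp Require Import ring.
Set Implicit Arguments. Unset Strict Implicit. Unset Printing Implicit Defensive.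
Import GRing.Theory.
Local Open Scope ring_scope.

Lemma mem_mkseq_lt (T : eqType) (f : nat -> T) r j :
  (j < r)%N -> f j \in mkseq f r.
Proof. by move=> lt_jr; apply: map_f; rewrite mem_iota. Qed.

Lemma free_of_span_sub (K : fieldType) (vT : vectType K) (X Y : seq vT) :
  free Y -> (<<Y>> <= <<X>>)%VS -> (size X <= size Y)%N -> free X.
Proof.
move=> freeY YX sXY; apply: (@basis_free _ _ <<Y>>%VS).
by rewrite basisEdim YX (eqP freeY).
Qed.

Lemma free_mkseq_row_free (F : fieldType) n r (y : nat -> 'cV[F]_n) :
  row_free (\matrix_(k < r) (y k)^T) -> free (mkseq y r).
Proof.
move=> freeY; have sz_y : size (mkseq y r) == r by rewrite size_mkseq.
rewrite -[mkseq y r]/(tval (Tuple sz_y)); apply/freeP => c yc0 k.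
suff /rowP/(_ k) : \row_l c l = 0 by rewrite !mxE.
apply: (row_free_inj freeY).
rewrite mul0mx -[RHS]trmx0 -yc0 linear_sum mulmx_sum_row.
by apply: eq_bigr => l _; rewrite rowK mxE linearZ /= (nth_mkseq _ _ (ltn_ord l)).
Qed.

Lemma col0_submx (F : fieldType) m n (M : 'M[F]_(m, n)) t :
  (forall k, M k t = 0) -> forall w : 'rV_n, (w <= M)%MS -> w 0 t = 0.
Proof.
by move=> Mt0 w /submxP [z ->]; rewrite mxE big1 // => k _; rewrite Mt0 mulr0.
Qed.

Lemma mxrank_adds_rV (F : fieldType) m n (M : 'M[F]_(m, n)) (v : 'rV_n) t :
  (forall w : 'rV_n, (w <= M)%MS -> w 0 t = 0) -> v 0 t != 0 ->
  \rank (M + v)%MS = (\rank M).+1.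
Proof.
move=> Mt0 vt0; have vn0 : v != 0 by apply: contraNneq vt0 => ->; rewrite mxE.
rewrite mxrank_disjoint_sum ?rank_rV ?vn0 ?addn1 //.
apply/eqP; rewrite -submx0; apply/rV_subP => w; rewrite sub_capmx.
case/andP => /Mt0 wt0 /sub_rVP [c wc]; move: wt0; rewrite wc mxE.
by move/eqP; rewrite mulf_eq0 (negPf vt0) orbF => /eqP ->; rewrite scale0r sub0mx.
Qed.

Lemma F2_two : 2%:R = 0 :> F2.
Proof. exact: pchar_Fp_0. Qed.

Lemma F2_addrr (x : F2) : x + x = 0.
Proof. by rewrite -mulr2n -mulr_natr F2_two mulr0. Qed.

Lemma F2_neq0_eq1 (x : F2) : x != 0 -> x = 1.
Proof. by case: x => [[|[|k]] Hk] // _; apply/val_inj. Qed.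

Lemma mx_F2_addrr m n (M : 'M[F2]_(m, n)) : M + M = 0.
Proof. by apply/matrixP => i j; rewrite !mxE F2_addrr. Qed.

Lemma mx_F2_neq0_entry m n (M : 'M[F2]_(m, n)) :
  M != 0 -> exists i j, M i j = 1.
Proof.
move=> Mn0.
have [[i j] /= /F2_neq0_eq1 Mij | M0] := pickP (fun p => M p.1 p.2 != 0).
  by exists i, j.
case/eqP: Mn0; apply/matrixP => i j.
by move/negbFE/eqP: (M0 (i, j)) => ->; rewrite mxE.
Qed.

Lemma x_of_yE n (y : nat -> 'cV[F2]_n) j :
  x_of_y y j = \sum_(i < (j./2).*2) y i + y j.
Proof.
rewrite /x_of_y; case: ifP => // j_lt2.
by case: j j_lt2 => [|[|]] //= _; rewrite big_ord0 add0r.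
Qed.

Lemma sum_x_of_y n (y : nat -> 'cV[F2]_n) m :
  \sum_(i < m.*2) x_of_y y i = \sum_(i < m.*2) y i.
Proof.
elim: m => [|m IHm]; first by rewrite !big_ord0.
rewrite doubleS !big_ord_recr /= IHm !x_of_yE doubleK (half_bit_double m true).
set S := \sum_(i < m.*2) y i.
by rewrite addrACA addrA mx_F2_addrr add0r.
Qed.

Lemma outer_sq_sum3 n (s u v : 'cV[F2]_n) :
  (s + u) *m (s + u)^T + (s + v) *m (s + v)^T + (s + u + v) *m (s + u + v)^T
  = s *m s^T + circ u v.
Proof.
apply/matrixP => k l; rewrite !mxE !big_ord1 !mxE.
move: (s k 0) (s l 0) (u k 0) (u l 0) (v k 0) (v l 0) => a a' b b' c c'.
transitivity (a * a' + (b * c' + c * b') + 2%:R *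
  (a * a' + a * b' + b * a' + b * b' + a * c' + c * a' + c * c')); first by ring.
by rewrite F2_two mul0r addr0.
Qed.

Lemma sum_sq_form_x_of_y n (y : nat -> 'cV[F2]_n) m :
  sum_sq_form m.*2 (x_of_y y) = \sum_(k < m) circ (y k.*2) (y k.*2.+1).
Proof.
rewrite /sum_sq_form sum_x_of_y; elim: m => [|m IHm].
  by rewrite !big_ord0 mul0mx addr0.
rewrite doubleS !big_ord_recr /= -IHm !x_of_yE doubleK (half_bit_double m true).
by rewrite -[RHS]addrA -outer_sq_sum3 !addrA.
Qed.

Lemma free_x_of_y n (y : nat -> 'cV[F2]_n) m :
  lin_indep m.*2 y -> lin_indep m.*2 (x_of_y y).
Proof.
move=> freey; apply: free_of_span_sub freey _ _; last by rewrite !size_mkseq.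
apply/span_subvP => v /mapP [j]; rewrite mem_iota add0n => /andP[_ lt_jm] ->.
have -> : y j = x_of_y y j - \sum_(i < (j./2).*2) x_of_y y i.
  by rewrite x_of_yE sum_x_of_y addrC addKr.
apply: memvB; first by rewrite memv_span ?mem_mkseq_lt.
apply: memv_suml => i _; rewrite memv_span ?mem_mkseq_lt //.
rewrite (leq_trans (ltn_ord i)) // (leq_trans _ (ltnW lt_jm)) //.
by rewrite -{2}(odd_double_half j) leq_addl.
Qed.

Lemma circ_sub n (x y : 'cV[F2]_n) : (circ x y <= x^T + y^T)%MS.
Proof.
by rewrite addmx_sub // (submx_trans (submxMl _ _)) ?addsmxSl ?addsmxSr.
Qed.

Lemma sum_circ_sub n m (y : nat -> 'cV[F2]_n) :
  ((\sum_(k < m) circ (y k.*2) (y k.*2.+1))%R <= \matrix_(k < m.*2) (y k)^T)%MS.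
Proof.
have y_sub l : (l < m.*2)%N -> ((y l)^T <= \matrix_(k < m.*2) (y k)^T)%MS.
  move=> lt_l.
  by rewrite -(rowK (fun k : 'I_m.*2 => (y k)^T) (Ordinal lt_l)) row_sub.
apply: summx_sub => k _; rewrite (submx_trans (circ_sub _ _)) // addsmx_sub.
by rewrite !y_sub ?ltn_double ?ltn_Sdouble.
Qed.

Lemma alternate_mx_sym n (A : 'M[F2]_n) :
  alternate_mx A -> forall k l, A k l = A l k.
Proof. by case=> symA _ k l; rewrite -{1}symA mxE. Qed.

Definition symp_reduce n (A : 'M[F2]_n) i j : 'M[F2]_n :=
  A - circ (row i A)^T (row j A)^T.

Section SymplecticReduction.

Variables (n : nat) (A : 'M[F2]_n) (i j : 'I_n).
Hypotheses (altA : alternate_mx A) (Aij : A i j = 1).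

Local Notation A' := (symp_reduce A i j).
Let Asym := alternate_mx_sym altA.

Lemma symp_reduceE k l : A' k l = A k l - (A i k * A j l + A j k * A i l).
Proof. by rewrite !mxE !big_ord1 !mxE. Qed.

Lemma alternate_symp_reduce : alternate_mx A'.
Proof.
case: altA => _ Adiag; split=> [|k]; last first.
  by rewrite symp_reduceE Adiag sub0r [A j k * _]mulrC F2_addrr oppr0.
by apply/matrixP => k l; rewrite mxE !symp_reduceE (Asym k l); ring.
Qed.

Lemma symp_reduce_col_i k : A' k i = 0.
Proof.
case: altA => _ Adiag.
by rewrite symp_reduceE Adiag mulr0 addr0 (Asym j i) Aij mulr1
  (Asym k i) subrr.
Qed.

Lemma symp_reduce_col_j k : A' k j = 0.
Proof.
case: altA => _ Adiag.
by rewrite symp_reduceE Adiag mulr0 add0r Aij mulr1 (Asym k j) subrr.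
Qed.

Lemma symp_reduce_sub : (A' <= A)%MS.
Proof.
rewrite addmx_sub ?submx_refl // (eqmx_opp _).
by rewrite (submx_trans (circ_sub _ _)) // !trmxK addsmx_sub !row_sub.
Qed.

Lemma symp_reduce_eqmx : (A :=: A' + row i A + row j A)%MS.
Proof.
apply/eqmxP/andP; split; last by rewrite !addsmx_sub symp_reduce_sub !row_sub.
rewrite -[X in (X <= _)%MS](subrK (circ (row i A)^T (row j A)^T)).
rewrite addmx_sub // -addsmxA; first exact: addsmxSl.
by rewrite (submx_trans (circ_sub _ _)) // !trmxK addsmxSr.
Qed.

Lemma mxrank_symp_reduce : \rank A = (\rank A').+2.
Proof.
case: altA => _ Adiag.
rewrite symp_reduce_eqmx (mxrank_adds_rV (t := i)); last first.
- by rewrite mxE (Asym j i) Aij oner_neq0.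
- move=> w /sub_addsmxP [[u1 u2] /= ->].
  rewrite mxE (col0_submx symp_reduce_col_i) ?submxMl // add0r mxE big_ord1 mxE.
  by rewrite Adiag mulr0.
rewrite (mxrank_adds_rV (t := j)) ?mxE ?Aij ?oner_neq0 //.
exact: col0_submx symp_reduce_col_j.
Qed.

End SymplecticReduction.

Lemma alternate_symplectic_decomposition n (A : 'M[F2]_n) : alternate_mx A ->
  exists m (y : nat -> 'cV[F2]_n),
    [/\ \rank A = m.*2, A = \sum_(k < m) circ (y k.*2) (y k.*2.+1)
      & forall k, (k < m.*2)%N -> ((y k)^T <= A)%MS].
Proof.
move rkA: (\rank A) => r; elim/ltn_ind: r A rkA => r IHr A rkA altA.
have [A0 | An0] := eqVneq A 0.
  by exists 0%N, (fun=> 0); rewrite -rkA A0 mxrank0 big_ord0.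
have [i [j Aij]] := mx_F2_neq0_entry An0.
have rkA' := mxrank_symp_reduce altA Aij.
have [|m [y' [rk_y' A'E y'_sub]]] :=
  IHr _ _ _ erefl (alternate_symp_reduce i j altA).
  by rewrite -rkA rkA'.
pose y k := match k with 0 => (row i A)^T | 1 => (row j A)^T | k.+2 => y' k end.
exists m.+1, y; split.
- by rewrite -rkA rkA' rk_y' doubleS.
- rewrite big_ord_recl /=; under eq_bigr do rewrite add0n.
  by rewrite -A'E addrC subrK.
case=> [|[|k]] lt_k; rewrite ?trmxK ?row_sub //=.
by rewrite (submx_trans (y'_sub k _)) ?symp_reduce_sub // -ltnS -ltnS -doubleS.
Qed.

Lemma free_symplectic_decomposition n m (A : 'M[F2]_n) (y : nat -> 'cV[F2]_n) :
  \rank A = m.*2 -> A = \sum_(k < m) circ (y k.*2) (y k.*2.+1) ->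
  (forall k, (k < m.*2)%N -> ((y k)^T <= A)%MS) -> lin_indep m.*2 y.
Proof.
move=> rkA AE y_sub; apply: free_mkseq_row_free.
have eqYA : (\matrix_(k < m.*2) (y k)^T == A)%MS.
  rewrite {2}AE sum_circ_sub andbT; apply/row_subP => k.
  by rewrite rowK y_sub.
by rewrite /row_free (eqmx_rank eqYA) rkA.
Qed.

Theorem lemma3p7 (n r : nat) (A : 'M[F2]_n) :
  alternate_mx A -> \rank A = r -> (0 < r)%N ->
  (exists x : nat -> 'cV[F2]_n, lin_indep r x /\ A = sum_sq_form r x) /\
  (forall (m : nat) (y : nat -> 'cV[F2]_n),
     r = m.*2 -> lin_indep r y ->
     A = \sum_(k < m) circ (y k.*2) (y k.*2.+1) ->
     lin_indep r (x_of_y y) /\ A = sum_sq_form r (x_of_y y)).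
Proof.
move=> altA rkA _. (* the empty family also settles r = 0 *)
have x_of_y_spec m y : lin_indep m.*2 y ->
    A = \sum_(k < m) circ (y k.*2) (y k.*2.+1) ->
    lin_indep m.*2 (x_of_y y) /\ A = sum_sq_form m.*2 (x_of_y y).
  by move=> freey AE; rewrite sum_sq_form_x_of_y; split; first exact: free_x_of_y.
split; last by move=> m y ->; apply: x_of_y_spec.
have [m [y [rk_y AE y_sub]]] := alternate_symplectic_decomposition altA.
exists (x_of_y y); rewrite -rkA rk_y.
exact: x_of_y_spec (free_symplectic_decomposition rk_y AE y_sub) AE.
Qed.
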